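(* $H$ is constant on each connected component of $\Gamma$.
   Context: Let $G=(\mathbb{V},E)$ be a finite graph with adjacency $\sim$. Let $a_{ij}=a_{ji}\ge0$ ($>0$ only if $i\sim j$) and $p_{ij}=p_{ji}\in[0,1]$ ($=0$ if $i\not\sim j$), with some $a_{ij}p_{ij}>0$. Fix $h_1\in(0,1]$; $\Delta$ is the set of arrays $x=(x_{ij})_{i,j\in\mathbb{V}}$ with $x_{ij}=x_{ji}\ge0$, $x_{ij}=0$ if $i\not\sim j$, $\sum_{i,j}x_{ij}=1$, $\sum_{(i,j):a_{ij}p_{ij}>0}x_{ij}\ge h_1$; $x_i=\sum_jx_{ij}$. $H(x)=\sum_{(i,j):x_{ij}>0}a_{ij}p_{ij}x_{ij}^2/(x_ix_j)$; $F(x)_{ij}=x_{ij}\big(a_{ij}p_{ij}\frac{x_{ij}}{x_ix_j}-H(x)\big)$, with $F_{ij}=0$ if $x_{ij}=0$ and $a_{ij}p_{ij}x_{ij}/(x_ix_j):=0$ if $a_{ij}p_{ij}=0$. $\Gamma=\{x\in\Delta:F(x)=0\}$ (with the topology induced from $\mathbb{R}^{\mathbb{V}\times\mathbb{V}}$). *)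

From HB Require Import structures.
From mathcomp Require Import all_boot all_order all_algebra.
From mathcomp Require Import all_classical all_reals all_analysis.
Import numFieldNormedType.Exports.
Set Implicit Arguments. Unset Strict Implicit. Unset Printing Implicit Defensive.
Import Order.TTheory GRing.Theory Num.Theory.
Local Open Scope classical_set_scope.
Local Open Scope ring_scope.

(* Vertex set V = 'I_n; arrays x = (x_ij) are n x n real matrices,
   'M[R]_n, carrying MathComp-Analysis' standard (normed, product) topology. *)

Section Defs.
Variables (R : realType) (n : nat).
Implicit Types (x a p : 'M[R]_n).

Definition xv x (i : 'I_n) : R := \sum_(j < n) x i j.

Definition Hfun a p x : R :=
  \sum_(i < n) \sum_(j < n | 0 < x i j)
     a i j * p i j * x i j ^+ 2 / (xv x i * xv x j).

Definition ratio a p x (i j : 'I_n) : R :=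
  if a i j * p i j == 0 then 0 else a i j * p i j * x i j / (xv x i * xv x j).

Definition Ffun a p x : 'M[R]_n :=
  \matrix_(i, j) (if x i j == 0 then 0 else x i j * (ratio a p x i j - Hfun a p x)).

Definition Delta (adj : rel 'I_n) a p (h1 : R) : set 'M[R]_n :=
  [set x | [/\ (forall i j, x i j = x j i),
              (forall i j, 0 <= x i j),
              (forall i j, ~~ adj i j -> x i j = 0),
              \sum_(i < n) \sum_(j < n) x i j = 1 &
              h1 <= \sum_(i < n) \sum_(j < n | 0 < a i j * p i j) x i j]].

Definition Gamma (adj : rel 'I_n) a p (h1 : R) : set 'M[R]_n :=
  [set x | Delta adj a p h1 x /\ Ffun a p x = 0].

End Defs.

From Pilot Require Import Defs.
From HB Require Import structures.
From mathcomp Require Import all_boot all_order all_algebra.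
From mathcomp Require Import all_classical all_reals all_analysis.
From mathcomp Require Import ring.
Import numFieldNormedType.Exports.
Import Order.TTheory GRing.Theory Num.Theory.
Local Open Scope classical_set_scope.
Local Open Scope ring_scope.
Set Implicit Arguments. Unset Strict Implicit.

(* At a point x of Gamma every positive entry satisfies
   a_ij p_ij x_ij / (x_i x_j) = H(x) > 0, i.e. x_ij = H(x) x_i x_j / (a_ij p_ij)
   on the support of x.  Summing over j gives H(x) sum_j x_j / (a_ij p_ij) = 1 on
   every row with x_i > 0; weighting these identities by y_i for a second point
   y with the same support and using the symmetry of sum_ij y_i x_j / (a_ij p_ij)
   gives H(x) = H(y).  So H takes finitely many values on Gamma.  Near x, the
   ratio at a fixed positive entry of x is continuous and equals H on Gamma,
   hence H is locally constant on Gamma. *)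

Section locally_constant.
Context {T : topologicalType} {U : Type}.

Lemma closure_level_set (A : set T) (f : T -> U) (P : U -> Prop) w :
  (\forall v \near w, A v -> f v = f w) ->
  closure [set v | A v /\ P (f v)] w -> P (f w).
Proof. by move=> fw /(_ _ fw) [v [[Av Pv] /(_ Av) <-]]. Qed.

Lemma connected_component_locally_constant (A : set T) (f : T -> U) :
  (forall x, A x -> \forall y \near x, A y -> f y = f x) ->
  forall x y, connected_component A x y -> f x = f y.
Proof.
move=> fA x y [C [Cx CA cC] Cy].
pose S1 := [set v | A v /\ f v = f x]; pose S2 := [set v | A v /\ f v <> f x].
have S12 : separated S1 S2.
  split; rewrite -subset0.
  - move=> v [clv [Av fvx]].
    exact: fvx (closure_level_set (P := eq^~ (f x)) (fA v Av) clv).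
  - move=> v [[Av fvx] clv].
    exact: (closure_level_set (P := fun u => u <> f x) (fA v Av) clv).
have C12 : C `<=` S1 `|` S2.
  by move=> v Cv; have [e|ne] := pselect (f v = f x); [left|right]; split => //; exact: CA.
have [CS1|CS2] := connected_subset S12 C12 cC; first by case: (CS1 y Cy).
by case: (CS2 x Cx).
Qed.

End locally_constant.

Lemma near_mem_seq_eq (R : realFieldType) (s : seq R) c :
  \forall v \near c, v \in s -> v = c.
Proof.
elim: s => [|w s IHs]; first by apply: filterE.
have [->|wc] := eqVneq w c.
  by apply: filterS IHs => v IHv; rewrite inE => /orP[/eqP//|]; exact: IHv.
have v_neq_w : \forall v \near c, v != w by apply: open_neq; rewrite /= eq_sym.
apply: filterS2 IHs v_neq_w => v IHv vw; rewrite inE => /orP[vw'|]; last exact: IHv.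
by move: vw; rewrite vw'.
Qed.

Section row_sums.
Variables (R : realType) (n : nat).
Implicit Types x : 'M[R]_n.

Lemma xv_ge_entry x i j : (forall k, 0 <= x i k) -> x i j <= xv x i.
Proof. by move=> x0; rewrite /xv (bigD1 j) //= lerDl sumr_ge0. Qed.

Lemma xv_ge0 x i : (forall k, 0 <= x i k) -> 0 <= xv x i.
Proof. by move=> x0; apply: sumr_ge0. Qed.

Lemma xv_eq0 x i : (forall k, 0 <= x i k) -> xv x i = 0 -> forall j, x i j = 0.
Proof. by move=> x0 xi0 j; apply: (psumr_eq0P (fun k _ => x0 k) xi0). Qed.

End row_sums.

Lemma xv_continuous (R : realType) n i : continuous (fun y : 'M[R]_n => xv y i).
Proof.
apply: continuous_big => [|j _]; first exact: add_continuous.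
exact: coord_continuous.
Qed.

Section factored_arrays.
Variables (R : realType) (n : nat) (m : 'I_n -> 'I_n -> R).
Implicit Types x y : 'M[R]_n.

Lemma factored_row_sum x c i :
  (forall j, x i j = c * m i j * xv x i * xv x j) -> xv x i != 0 ->
  c * \sum_j m i j * xv x j = 1.
Proof.
move=> xE xi0; apply: (mulfI xi0); rewrite mulr1 [in RHS]/xv (eq_bigr _ (fun j _ => xE j)).
by rewrite !mulr_sumr; apply: eq_bigr => j _; ring.
Qed.

Lemma factored_bilinear_sum x y c :
  (forall i j, x i j = c * m i j * xv x i * xv x j) ->
  (forall i, xv x i = 0 -> xv y i = 0) ->
  c * \sum_i \sum_j m i j * xv y i * xv x j = \sum_i xv y i.
Proof.
move=> xE yx0; rewrite mulr_sumr; apply: eq_bigr => i _.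
have [xi0|xi0] := eqVneq (xv x i) 0.
  by rewrite yx0 // big1 ?mulr0 // => j _; rewrite mulr0 mul0r.
rewrite -[RHS]mulr1 -(factored_row_sum (xE i) xi0) !mulr_sumr.
by apply: eq_bigr => j _; ring.
Qed.

End factored_arrays.

Definition supp (R : numDomainType) n (x : 'M[R]_n) : {set 'I_n * 'I_n} :=
  [set ij | 0 < x ij.1 ij.2].

Section Gamma.
Variables (R : realType) (n : nat) (adj : rel 'I_n) (a p : 'M[R]_n) (h1 : R).
Hypothesis ap_ge0 : forall i j, 0 <= a i j * p i j.
Hypothesis apC : forall i j, a i j * p i j = a j i * p j i.
Hypothesis h1_gt0 : 0 < h1.

Local Notation Gamma := (Gamma adj a p h1).
Local Notation H := (Hfun a p).
Implicit Types x y : 'M[R]_n.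

Lemma Gamma_xv_gt0 x i j : Gamma x -> 0 < x i j -> 0 < xv x i /\ 0 < xv x j.
Proof.
case=> -[xC x0 _ _ _] _ xij; split; first exact: lt_le_trans xij (xv_ge_entry _ _).
by rewrite xC in xij; exact: lt_le_trans xij (xv_ge_entry _ _).
Qed.

Lemma Gamma_exists_pos x : Gamma x -> exists i j, 0 < a i j * p i j /\ 0 < x i j.
Proof.
case=> -[_ x0 _ _ xh1] _.
have [i /andP[_]] : exists i : 'I_n, true && (0 < \sum_(j | 0 < a i j * p i j) x i j).
  apply: psumr_neq0P => [i _|s0]; first exact: sumr_ge0.
  by move: xh1; rewrite s0 leNgt h1_gt0.
move=> /gt_eqF/negbT/eqP/psumr_neq0P[// | j /andP[apj xij]].
by exists i, j.
Qed.

Lemma Gamma_Hfun_gt0 x : Gamma x -> 0 < H x.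
Proof.
move=> Gx; have [i [j [apj xij]]] := Gamma_exists_pos Gx.
have [[_ x0 _ _ _] _] := Gx; have [xi xj] := Gamma_xv_gt0 Gx xij.
have row_ge0 k P : 0 <= \sum_(l | P l) a k l * p k l * x k l ^+ 2 / (xv x k * xv x l).
  apply: sumr_ge0 => l _.
  by apply: divr_ge0; apply: mulr_ge0; rewrite ?ap_ge0 ?sqr_ge0 ?xv_ge0.
rewrite /Hfun (bigD1 i) //= (bigD1 j xij) /= -addrA ltr_pwDl //.
  by apply: divr_gt0; apply: mulr_gt0; rewrite // exprn_gt0.
by rewrite addr_ge0 ?row_ge0 //; apply: sumr_ge0 => k _; exact: row_ge0.
Qed.

Lemma Gamma_ratio x i j : Gamma x -> 0 < x i j ->
  a i j * p i j != 0 /\ a i j * p i j * x i j / (xv x i * xv x j) = H x.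
Proof.
move=> Gx xij; have [_ /matrixP/(_ i j)] := Gx.
rewrite !mxE (gt_eqF xij) => /eqP; rewrite mulf_eq0 (gt_eqF xij) /= subr_eq0 /Defs.ratio.
case: ifPn => [_ /eqP H0|_ /eqP ->]; last by []; move: (Gamma_Hfun_gt0 Gx).
by rewrite -H0 ltxx.
Qed.

Definition invw x i j : R := if (i, j) \in supp x then (a i j * p i j)^-1 else 0.

Lemma invwC x i j : Gamma x -> invw x i j = invw x j i.
Proof. by case=> -[xC _ _ _ _] _; rewrite /invw !inE /= xC apC. Qed.

Lemma Gamma_factor x i j : Gamma x -> x i j = H x * invw x i j * xv x i * xv x j.
Proof.
move=> Gx; have [[_ x0 _ _ _] _] := Gx; rewrite /invw inE /=.
case: ifPn => [xij|]; last by rewrite -leNgt mulr0 !mul0r => xij; apply/le_anti; rewrite xij x0.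
have [apn <-] := Gamma_ratio Gx xij.
move: apn; rewrite mulf_eq0 negb_or => /andP[an pn].
have [/gt_eqF xi /gt_eqF xj] := Gamma_xv_gt0 Gx xij.
by field; rewrite an pn xi xj.
Qed.

Lemma xv_eq0_supp x y i : Gamma x -> Gamma y -> supp x = supp y ->
  xv x i = 0 -> xv y i = 0.
Proof.
case=> -[_ x0 _ _ _] _ [[_ y0 _ _ _] _] Sxy /(xv_eq0 (x0 i)) xi0.
rewrite /xv big1 // => j _; apply/le_anti; rewrite y0 andbT leNgt.
by have := congr1 (fun S : {set _} => (i, j) \in S) Sxy; rewrite !inE /= xi0 ltxx => <-.
Qed.

Lemma Hfun_eq_supp x y : Gamma x -> Gamma y -> supp x = supp y -> H x = H y.
Proof.
move=> Gx Gy Sxy.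
have sum_xv1 z : Gamma z -> \sum_i xv z i = 1 by case=> -[].
have Fx := factored_bilinear_sum (fun i j => Gamma_factor i j Gx)
  (fun i => xv_eq0_supp Gx Gy Sxy (i := i)).
have Fy := factored_bilinear_sum (fun i j => Gamma_factor i j Gy)
  (fun i => xv_eq0_supp Gy Gx (esym Sxy) (i := i)).
have invw_yx : invw y = invw x by rewrite /invw Sxy.
move: Fx Fy; rewrite !sum_xv1 // invw_yx.
set B := \sum_i \sum_j invw x i j * xv y i * xv x j.
have -> : \sum_i \sum_j invw x i j * xv x i * xv y j = B.
  rewrite exchange_big; apply: eq_bigr => i _; apply: eq_bigr => j _.
  by rewrite (invwC j i Gx) mulrAC.
move=> SxE SyE; have B_neq0 : B != 0.
  by apply/eqP => B0; move: SxE; rewrite B0 mulr0 => /eqP; rewrite eq_sym oner_eq0.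
by apply: (mulIf B_neq0); rewrite SxE SyE.
Qed.

Lemma Gamma_Hfun_finite : exists s : seq R, forall y, Gamma y -> H y \in s.
Proof.
pose rep E := xget 0 [set z | Gamma z /\ supp z = E].
exists [seq H (rep E) | E <- enum {set 'I_n * 'I_n}] => y Gy.
have [Grep Srep] : Gamma (rep (supp y)) /\ supp (rep (supp y)) = supp y.
  by apply: (@xgetPex _ 0 [set z | Gamma z /\ supp z = supp y]); exists y.
rewrite (Hfun_eq_supp Gy Grep (esym Srep)).
by apply/mapP; exists (supp y); rewrite ?mem_enum.
Qed.

Lemma Gamma_Hfun_near x : Gamma x -> \forall y \near x, Gamma y -> H y = H x.
Proof.
move=> Gx; have [s Hs] := Gamma_Hfun_finite.
have [i [j [_ xij]]] := Gamma_exists_pos Gx.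
pose f y := a i j * p i j * y i j / (xv y i * xv y j).
have [_ fxE] := Gamma_ratio Gx xij.
have [/gt_eqF xi /gt_eqF xj] := Gamma_xv_gt0 Gx xij.
have f_cont : {for x, continuous f}.
  apply: continuousM; first apply: (continuousM (s := fun=> a i j * p i j)).
  - exact: cst_continuous.
  - exact: coord_continuous.
  apply: continuousV; first by rewrite mulf_eq0 xi xj.
  by apply: continuousM; exact: xv_continuous.
have pos_near : \forall y \near x, 0 < (y : 'M[R]_n) i j.
  exact: (cvgr_gt (f := fun y : 'M[R]_n => y i j) _ (@coord_continuous R n n i j x) _ xij).
have val_near : \forall y \near x, f y \in s -> f y = f x.
  exact: f_cont (near_mem_seq_eq s (f x)).
apply: filterS2 pos_near val_near => y yij fy Gy.
have [_ fyE] := Gamma_ratio Gy yij.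
by rewrite -fxE -fyE; apply: fy; rewrite /f fyE; exact: Hs.
Qed.

End Gamma.

Unset Implicit Arguments. Set Strict Implicit.

Theorem proposition5 (R : realType) (n : nat) (adj : rel 'I_n)
  (a p : 'M[R]_n) (h1 : R) :
  (forall i j, adj i j = adj j i) ->
  (forall i j, a i j = a j i) ->
  (forall i j, 0 <= a i j) ->
  (forall i j, 0 < a i j -> adj i j) ->
  (forall i j, p i j = p j i) ->
  (forall i j, 0 <= p i j <= 1) ->
  (forall i j, ~~ adj i j -> p i j = 0) ->
  (exists i j, 0 < a i j * p i j) ->
  0 < h1 -> h1 <= 1 ->
  forall x y : 'M[R]_n,
    connected_component (Gamma adj a p h1) x y ->
    Hfun a p x = Hfun a p y.
Proof.
move=> _ aC a_ge0 _ pC p01 _ _ h1_gt0 _.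
have ap_ge0 i j : 0 <= a i j * p i j by rewrite mulr_ge0 //; case/andP: (p01 i j).
have apC i j : a i j * p i j = a j i * p j i by rewrite aC pC.
apply: connected_component_locally_constant => x Gx.
exact: (Gamma_Hfun_near ap_ge0 apC h1_gt0 Gx).
Qed.
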